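(* Let $D$ be a vertex-supported effective divisor on a metric graph $\Gamma$. Let $\mathcal{C}$ be the set of all cells of $|D|$ and $\mathcal{A}$ the set of all anchor cells of $|D|$. (1) There is a function $a:\mathcal{C}\to\mathcal{A}$ such that for each $C\in\mathcal{C}$ and a representative $L$ of $C$, the cell $a(C)$ is represented by an anchor divisor $N$ such that (i) $N(v)=L(v)$ for all vertices $v$ of $\Gamma$, and (ii) rational functions $f,g\in R(D)$ with $L=D+(f)$ and $N=D+(g)$ have the same outgoing slopes at the endpoints of every edge of $\Gamma$. (2) For this map $a$ and any anchor cell $A\in\mathcal{A}$, we have $|a^{-1}(A)|=2^{s(A)}$. Furthermore, for $0\le j\le s(A)$, there are exactly $\binom{s(A)}{j}$ cells of dimension $\dim A+j$ in $a^{-1}(A)$.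
   Context: A metric graph $\Gamma=(V,E)$ is a connected undirected graph whose edges have positive real lengths $M_e$. Divisors are finite formal $\mathbb{Z}$-combinations of points of $\Gamma$; effective means nonnegative coefficients; vertex-supported means support in $V$. A rational function is a continuous $f:\Gamma\to\mathbb{R}$, piecewise linear on each edge with finitely many pieces and integer slopes; $(f)=\sum_x\mathrm{ord}_x(f)x$ with $\mathrm{ord}_x(f)$ the sum of outgoing slopes of $f$ at $x$. $R(D)=\{f: D+(f)\text{ effective}\}$, $|D|=\{D+(f):f\in R(D)\}$. Cells of $|D|$: identify each open edge $e$ with $(0,M_e)$. A cell is given by data: nonnegative integers $d_v$ ($v\in V$); for some edges $e$ an ordered partition $d_e=\sum_{i=1}^{r_e}d_e^i$ into positive integers; integers $m_e$ ($e\in E$). $L\in|D|$ belongs to the cell iff $L(v)=d_v$ for all $v$; for edges with a partition $L|_{e^\circ}=\sum_{i}d_e^ix_i$ with $0<x_1<\dots<x_{r_e}<M_e$, and $L|_{e^\circ}=0$ for other edges; and every $f\in R(D)$ with $L=D+(f)$ has outgoing slope $m_e$ at $0\in e$ for all $e$. Elements of a cell are its representatives. For a representative $L$ of a cell $C$, with $I_L=\{x\in\Gamma\setminus V:L(x)>0\}$, $\dim C$ is one less than the number of connected components of $\Gamma\setminus I_L$. A divisor is an anchor divisor if each edge has at most one interior point where it is positive; a cell is an anchor cell if all its representatives are anchor divisors. For an anchor cell $A$: if $e_1,\dots,e_r$ are the edges on which the data of $A$ contain a (necessarily one-part) partition $c_i=c_i$, set $s(A)=\sum_{i=1}^r(c_i-1)$;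 if there are no such edges, $s(A)=0$. *)

From HB Require Import structures.
From mathcomp Require Import all_boot all_order all_algebra.
From mathcomp Require Import reals.
From Stdlib Require Import ClassicalEpsilon.

Set Implicit Arguments.
Unset Strict Implicit.
Unset Printing Implicit Defensive.

Import Order.TTheory GRing.Theory Num.Theory.
Local Open Scope ring_scope.

Section MetricGraph.

(* A metric graph: finite vertex set V, finite edge set E; every edge e has
   endpoints [src e], [tgt e] and a length [M e]; the open edge e is identified
   with the open interval (0, M e), 0 corresponding to [src e] and [M e] to
   [tgt e]. *)
Variables (R : realType) (V E : finType) (src tgt : E -> V) (M : E -> R).

Definition adj : rel V := fun u v =>
  [exists e : E, ((src e == u) && (tgt e == v)) || ((src e == v) && (tgt e == u))].

Definition connected_graph : Prop := forall u v : V, connect adj u v.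

(* Points of Gamma: vertices, and points [PE e t] with 0 < t < M e. *)
Inductive point := PV of V | PE of E & R.

Definition interior (e : E) (t : R) : bool := (0 < t) && (t < M e).

Definition is_divisor (D : point -> int) : Prop :=
  (forall e t, ~~ interior e t -> D (PE e t) = 0) /\
  exists s : seq (E * R), forall e t, D (PE e t) != 0 -> (e, t) \in s.

Definition effective (D : point -> int) : Prop := forall x, 0 <= D x.

Definition vertex_supported (D : point -> int) : Prop :=
  forall e t, D (PE e t) = 0.

(* restriction of a function on Gamma to the closed edge [0, M e] *)
Definition fe (f : point -> R) (e : E) (t : R) : R :=
  if t <= 0 then f (PV (src e))
  else if M e <= t then f (PV (tgt e)) else f (PE e t).

Definition ratfun (f : point -> R) : Prop :=
  forall e : E, exists (n : nat) (b : nat -> R) (s : nat -> int),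
    [/\ b 0%N = 0, b n = M e, (forall i, (i < n)%N -> b i < b i.+1) &
        forall i t, (i < n)%N -> b i <= t <= b i.+1 ->
          fe f e t = fe f e (b i) + (s i)%:~R * (t - b i)].

Definition has_rslope (g : R -> R) (t : R) (s : int) : Prop :=
  exists2 eps : R, 0 < eps & forall h, 0 < h < eps -> g (t + h) = g t + s%:~R * h.
Definition has_lslope (g : R -> R) (t : R) (s : int) : Prop :=
  exists2 eps : R, 0 < eps & forall h, 0 < h < eps -> g (t - h) = g t - s%:~R * h.
Definition rslope (g : R -> R) (t : R) : int := epsilon (inhabits 0) (has_rslope g t).
Definition lslope (g : R -> R) (t : R) : int := epsilon (inhabits 0) (has_lslope g t).

(* outgoing slope of f at the endpoint 0 (= src e) and M e (= tgt e) of e *)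
Definition out0 (f : point -> R) (e : E) : int := rslope (fe f e) 0.
Definition out1 (f : point -> R) (e : E) : int := - lslope (fe f e) (M e).

(* ord_x(f) = sum of outgoing slopes; (f) = sum_x ord_x(f) x *)
Definition pdiv (f : point -> R) (x : point) : int :=
  match x with
  | PV v => \sum_(e | src e == v) out0 f e + \sum_(e | tgt e == v) out1 f e
  | PE e t => if interior e t then rslope (fe f e) t - lslope (fe f e) t else 0
  end.

Definition addpdiv (D : point -> int) (f : point -> R) : point -> int :=
  fun x => D x + pdiv f x.

Definition RD (D : point -> int) (f : point -> R) : Prop :=
  ratfun f /\ effective (addpdiv D f).

Definition linsys (D : point -> int) (L : point -> int) : Prop :=
  exists2 f, RD D f & L = addpdiv D f.

(* Cell data: (d_v)_v, for each edge a (possibly empty) ordered partition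
   (the empty sequence meaning "no partition on e"), and (m_e)_e. *)
Definition cdata := ({ffun V -> nat} * {ffun E -> seq nat} * {ffun E -> int})%type.
Definition cd_v (c : cdata) := c.1.1.
Definition cd_p (c : cdata) := c.1.2.
Definition cd_m (c : cdata) := c.2.

(* L|_{e°} = sum_i p_i x_i with 0 < x_1 < ... < x_r < M e
   (for p = [::] this says L|_{e°} = 0) *)
Definition edge_conf (L : point -> int) (e : E) (p : seq nat) : Prop :=
  exists x : nat -> R,
    [/\ forall i, (i.+1 < size p)%N -> x i < x i.+1,
        (0 < size p)%N -> 0 < x 0%N /\ x (size p).-1 < M e &
        forall t, interior e t ->
          L (PE e t) = (\sum_(i < size p | x i == t) (nth 0%N p i)%:Z)].

Definition in_cell (D : point -> int) (c : cdata) (L : point -> int) : Prop :=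
  [/\ linsys D L,
      forall v, L (PV v) = (cd_v c v)%:Z,
      forall e, edge_conf L e (cd_p c e) &
      forall f, RD D f -> L = addpdiv D f -> forall e, out0 f e = cd_m c e].

Definition is_cell (D : point -> int) (c : cdata) : Prop :=
  (forall e, all (fun k => 0 < k)%N (cd_p c e)) /\ exists L, in_cell D c L.

Definition anchor_divisor (L : point -> int) : Prop :=
  forall e t1 t2, interior e t1 -> interior e t2 ->
    0 < L (PE e t1) -> 0 < L (PE e t2) -> t1 = t2.

Definition is_anchor_cell (D : point -> int) (c : cdata) : Prop :=
  is_cell D c /\ forall L, in_cell D c L -> anchor_divisor L.

Definition s_anchor (c : cdata) : nat :=
  \sum_(e : E) (if cd_p c e is [:: k] then k.-1 else 0%N).

(* number of connected components of Gamma \ I_L, where k e is the number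
   of interior points of e at which L is positive: each edge with k e >= 1
   points removed contributes (k e - 1) open segments not containing a vertex,
   the rest is the graph on V with the edges not meeting I_L. *)
Definition ncomp_compl (L : point -> int) (n : nat) : Prop :=
  exists k : E -> nat,
    (forall e, exists s : seq R,
        [/\ uniq s, size s = k e &
            forall t, (t \in s) = interior e t && (0 < L (PE e t))]) /\
    n = (\sum_(e : E) (k e).-1 +
         n_comp (fun u v : V => [exists e : E, (k e == 0%N) &&
                   (((src e == u) && (tgt e == v)) || ((src e == v) && (tgt e == u)))])
                [pred _ : V | true])%N.

Definition cell_dim (D : point -> int) (c : cdata) (k : nat) : Prop :=
  exists2 L, in_cell D c L & ncomp_compl L k.+1.

End MetricGraph.

From Pilot Require Import Defs.
From HB Require Import structures.
From mathcomp Require Import all_boot all_order all_algebra.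
From mathcomp Require Import reals.
From mathcomp Require Import ring lra zify.
From Stdlib Require Import ClassicalEpsilon FunctionalExtensionality.
Import Order.TTheory GRing.Theory Num.Theory.
Local Open Scope ring_scope.
Set Implicit Arguments.
Unset Strict Implicit.
Unset Printing Implicit Defensive.

(* On an edge of length [M], a rational function [f] with [D + (f)] effective is determined
   by its value [a] and outgoing slope [m] at the source together with the chips of
   [D + (f)] inside the edge: if they are [p_k] chips at [x_k], then
   [f t = a + m t + sum_k p_k (t - x_k)_+].  At the target this gives the value
   [a + (m + sum_k p_k) M - sum_k p_k x_k], so the chips are seen outside the edge only
   through their total mass and their moment.  Hence the chips of an edge can be replaced by
   any other composition of the same mass with the same moment without changing anything
   at the vertices.  Merging them into one chip at their centre of mass is the anchor map;
   conversely the cells over an anchor cell [A] are obtained by splitting each one-part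
   chip [c_e] into a composition of [c_e], i.e. by choosing a subset of the [s(A)] gaps
   between unit chips, and each chosen gap adds a component to the complement of [I_L],
   hence a dimension. *)

Section Compositions.

Definition incr_head (s : seq nat) : seq nat := if s is h :: t then h.+1 :: t else s.

(* [comp_of_bits bs] is the composition of [(size bs).+1] obtained from a row of
   unit parts by cutting exactly at the gaps [i] with [nth false bs i]. *)
Fixpoint comp_of_bits (bs : seq bool) : seq nat :=
  if bs is b :: bs' then (if b then 1%N :: comp_of_bits bs' else incr_head (comp_of_bits bs'))
  else [:: 1%N].

Fixpoint bits_of_comp (s : seq nat) : seq bool :=
  if s is h :: t then nseq h.-1 false ++ (if t is [::] then [::] else true :: bits_of_comp t)
  else [::].

Lemma comp_of_bits_head bs : exists h t, comp_of_bits bs = h.+1 :: t.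
Proof.
elim: bs => [|[] bs [h [t IH]]] /=; first by exists 0%N, [::].
  by exists 0%N, (h.+1 :: t); rewrite IH.
by exists h.+1, t; rewrite IH.
Qed.

Lemma comp_of_bitsK : cancel comp_of_bits bits_of_comp.
Proof.
elim=> [|b bs IH] //=; have [h [t E]] := comp_of_bits_head bs.
by rewrite E /= in IH *; case: b; rewrite /= IH.
Qed.

Lemma iter_incr_head n h t : iter n incr_head (h :: t) = (n + h)%N :: t.
Proof. by elim: n => //= n ->. Qed.

Lemma comp_of_bits_cat_false n bs :
  comp_of_bits (nseq n false ++ bs) = iter n incr_head (comp_of_bits bs).
Proof. by elim: n => //= n ->. Qed.

Lemma bits_of_compK s : all (fun k => 0 < k)%N s -> s != [::] ->
  comp_of_bits (bits_of_comp s) = s.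
Proof.
elim: s => // h t IH /= /andP[h_gt0 t_pos] _.
rewrite comp_of_bits_cat_false; case: t IH t_pos => [|h' t'] IH t_pos /=.
  by rewrite iter_incr_head addn1 prednK.
by rewrite IH // iter_incr_head addn1 prednK.
Qed.

Lemma sumn_comp_of_bits bs : sumn (comp_of_bits bs) = (size bs).+1.
Proof.
elim: bs => [|[] bs IH] //=; first by rewrite IH.
by have [h [t E]] := comp_of_bits_head bs; rewrite E /= in IH *; rewrite -IH.
Qed.

Lemma comp_of_bits_pos bs : all (fun k => 0 < k)%N (comp_of_bits bs).
Proof.
elim: bs => [|[] bs IH] //=.
by have [h [t E]] := comp_of_bits_head bs; rewrite E /= in IH *.
Qed.

Lemma size_comp_of_bits bs : size (comp_of_bits bs) = (count id bs).+1.
Proof.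
elim: bs => [|[] bs IH] //=; first by rewrite IH.
by have [h [t E]] := comp_of_bits_head bs; rewrite E /= in IH *.
Qed.

Lemma comp_of_bits_inj : injective comp_of_bits.
Proof. exact: can_inj comp_of_bitsK. Qed.

Lemma comp_of_bits_onto s : all (fun k => 0 < k)%N s -> s != [::] ->
  exists2 bs, size bs = (sumn s).-1 & comp_of_bits bs = s.
Proof.
move=> s_pos s_nil; exists (bits_of_comp s); last exact: bits_of_compK.
by rewrite -[in RHS](bits_of_compK s_pos s_nil) sumn_comp_of_bits.
Qed.

End Compositions.

Section OneSidedSlopes.
Variable R : realType.
Implicit Types (g : R -> R) (t : R) (s : int).

Lemma has_rslope_unique g t s1 s2 : has_rslope g t s1 -> has_rslope g t s2 -> s1 = s2.
Proof.
move=> [e1 e1_gt0 g1] [e2 e2_gt0 g2].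
have [h /andP[h_gt0 h_lt1] h_lt2] : exists2 h, 0 < h < e1 & h < e2.
  have m_gt0 : 0 < Num.min e1 e2 by rewrite lt_min e1_gt0.
  have m_le1 : Num.min e1 e2 <= e1 by rewrite ge_min lexx.
  have m_le2 : Num.min e1 e2 <= e2 by rewrite ge_min lexx orbT.
  by exists (Num.min e1 e2 / 2); [apply/andP; split|]; lra.
have := g1 h; have := g2 h; rewrite h_gt0 h_lt1 h_lt2 => /(_ isT) g2h /(_ isT) g1h.
by apply: (@intr_inj R); apply: (mulIf (lt0r_neq0 h_gt0)); lra.
Qed.

Lemma has_lslope_rev g t s : has_lslope g t s -> has_rslope (g \o -%R) (- t) (- s).
Proof.
move=> [e e_gt0 gl]; exists e => // h /gl /=.
by rewrite opprD !opprK rmorphN mulNr.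
Qed.

Lemma has_lslope_unique g t s1 s2 : has_lslope g t s1 -> has_lslope g t s2 -> s1 = s2.
Proof.
move=> /has_lslope_rev g1 /has_lslope_rev g2; apply: oppr_inj.
exact: has_rslope_unique g1 g2.
Qed.

Lemma rslopeE g t s : has_rslope g t s -> rslope g t = s.
Proof. by move=> gs; apply: (has_rslope_unique _ gs); apply: epsilon_spec; exists s. Qed.

Lemma lslopeE g t s : has_lslope g t s -> lslope g t = s.
Proof. by move=> gs; apply: (has_lslope_unique _ gs); apply: epsilon_spec; exists s. Qed.

End OneSidedSlopes.

Section PiecewiseLinear.
Variable R : realType.

Definition piecewise_linear (g : R -> R) (Mx : R) (n : nat) (b : nat -> R) (s : nat -> int) :=
  [/\ b 0%N = 0, b n = Mx, (forall i, (i < n)%N -> b i < b i.+1) &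
      forall i t, (i < n)%N -> b i <= t <= b i.+1 -> g t = g (b i) + (s i)%:~R * (t - b i)].

Variables (g : R -> R) (Mx : R) (n : nat) (b : nat -> R) (s : nat -> int).
Hypothesis gP : piecewise_linear g Mx n b s.

Lemma break_lt : {in [pred i | (i <= n)%N] &, {homo b : i j / (i < j)%N >-> i < j}}.
Proof.
case: gP => _ _ b_incr _; apply: homo_ltn_in; first exact: lt_trans.
  by move=> i j _ /[!inE] j_le k /andP[_ kj]; rewrite inE; lia.
by move=> i _ /[!inE] i_lt; apply: b_incr.
Qed.

Lemma break_le : {in [pred i | (i <= n)%N] &, {mono b : i j / (i <= j)%N >-> i <= j}}.
Proof. exact: le_mono_in break_lt. Qed.

Lemma break_bound i : (i <= n)%N -> 0 <= b i <= Mx.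
Proof.
by case: gP => b0 bn _ _ i_le; rewrite -{1}b0 -bn !break_le ?inE.
Qed.

Lemma piecewise_rslope i t : (i < n)%N -> b i <= t < b i.+1 -> rslope g t = s i.
Proof.
case: gP => _ _ _ g_lin i_lt /andP[bi_le t_lt]; apply: rslopeE.
exists (b i.+1 - t); first by rewrite subr_gt0.
move=> h /andP[h_gt0 h_lt].
rewrite (g_lin i (t + h)) // ?(g_lin i t) //; first ring.
  by rewrite bi_le ltW.
by apply/andP; split; lra.
Qed.

Lemma piecewise_lslope i t : (i < n)%N -> b i < t <= b i.+1 -> lslope g t = s i.
Proof.
case: gP => _ _ _ g_lin i_lt /andP[bi_lt t_le]; apply: lslopeE.
exists (t - b i); first by rewrite subr_gt0.
move=> h /andP[h_gt0 h_lt].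
rewrite (g_lin i (t - h)) // ?(g_lin i t) //; first ring.
  by rewrite t_le ltW.
by apply/andP; split; lra.
Qed.

Lemma piecewise_piece t : 0 < Mx -> 0 <= t <= Mx ->
  exists2 i, (i < n)%N & b i <= t <= b i.+1.
Proof.
case: gP => b0 bn b_incr _ Mx_gt0 /andP[t_ge0 t_le].
have n_gt0 : (0 < n)%N by rewrite lt0n; apply: contraTneq Mx_gt0 => n0; rewrite -bn n0 b0 ltxx.
suff: forall j, (j <= n)%N -> t <= b j -> exists2 i, (i < n)%N & b i <= t <= b i.+1.
  by move/(_ n (leqnn n)); rewrite bn; apply.
elim=> [_ t_le0|j IH j_lt t_le_j].
  have b1_gt0 : 0 < b 1 by rewrite -b0 b_incr.
  by exists 0%N; rewrite // b0 t_ge0 (le_trans t_le0) // b0 ltW.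
have [t_le_bj|bj_lt] := leP t (b j); first exact: IH (ltnW j_lt) t_le_bj.
by exists j; rewrite // (ltW bj_lt).
Qed.

Lemma piecewise_interior t : 0 < t < Mx ->
  (exists i, [/\ (0 < i)%N, (i < n)%N & t = b i]) \/
  (exists2 i, (i < n)%N & b i < t < b i.+1).
Proof.
case: gP => b0 bn _ _ /andP[t_gt0 t_lt].
have t_in : 0 <= t <= Mx by rewrite !ltW.
have [i i_lt /andP[bi_le t_le]] := piecewise_piece (lt_trans t_gt0 t_lt) t_in.
have [t_bi|t_bi] := eqVneq t (b i).
  left; exists i; split => //; rewrite lt0n; apply: contraTneq t_gt0 => i0.
  by rewrite t_bi i0 b0 ltxx.
have [t_bi1|t_bi1] := eqVneq t (b i.+1).
  left; exists i.+1; split => //; rewrite ltn_neqAle i_lt andbT.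
  by apply: contraTneq t_lt => i1; rewrite t_bi1 i1 bn ltxx.
by right; exists i; rewrite // !lt_neqAle eq_sym t_bi t_bi1 bi_le t_le.
Qed.

End PiecewiseLinear.

Lemma eq_piecewise_linear (R : realType) (g g' : R -> R) Mx n b s :
  piecewise_linear g Mx n b s -> (forall t, 0 <= t <= Mx -> g t = g' t) ->
  piecewise_linear g' Mx n b s.
Proof.
move=> gP gg'; have [b0 bn b_incr g_lin] := gP; split => // i t i_lt t_in.
have bi_in := break_bound gP (ltnW i_lt); have bi1_in := break_bound gP i_lt.
rewrite -!gg' //; first exact: g_lin.
by move: t_in bi_in bi1_in => /andP[? ?] /andP[? ?] /andP[? ?]; apply/andP; split; lra.
Qed.

Lemma sumn_nth (p : seq nat) : sumn p = \sum_(k < size p) nth 0%N p k.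
Proof. by rewrite sumnE (big_nth 0%N) big_mkord. Qed.

Lemma sumn_pos_gt0 (p : seq nat) : all (fun k => 0 < k)%N p -> (0 < sumn p)%N = (p != [::]).
Proof. by case: p => //= h t /andP[h_gt0 _]; rewrite addn_gt0 h_gt0. Qed.

Section Profile.
Variable R : realType.
Implicit Types (a t u w Mx : R) (sg : int) (x : nat -> R) (p : seq nat).

Lemma natr_sumn p : (sumn p)%:R = \sum_(k < size p) (nth 0%N p k)%:R :> R.
Proof. by rewrite sumn_nth natr_sum. Qed.

Lemma intz_sumn p : (sumn p)%:Z = \sum_(k < size p) (nth 0%N p k)%:Z.
Proof. by rewrite sumn_nth (big_morph Posz PoszD (erefl _)). Qed.

Definition chip_config Mx p x : Prop :=
  [/\ forall i, (i.+1 < size p)%N -> x i < x i.+1,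
      (0 < size p)%N -> 0 < x 0%N /\ x (size p).-1 < Mx &
      all (fun k => 0 < k)%N p].

Definition chips_at p x t : int := \sum_(k < size p | x k == t) (nth 0%N p k)%:Z.

Definition moment p x : R := \sum_(k < size p) (nth 0%N p k)%:R * x k.

Definition profile a sg x p t : R :=
  a + sg%:~R * t + \sum_(k < size p) (nth 0%N p k)%:R * (if x k <= t then t - x k else 0).

Definition profile_slope sg x p u : int :=
  sg + \sum_(k < size p | x k <= u) (nth 0%N p k)%:Z.

Section ChipConfig.
Variables (Mx : R) (p : seq nat) (x : nat -> R).
Hypothesis xP : chip_config Mx p x.

Lemma config_homo : {in [pred i | (i < size p)%N] &, {homo x : i j / (i < j)%N >-> i < j}}.
Proof.
case: xP => x_incr _ _; apply: homo_ltn_in; first exact: lt_trans.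
  by move=> i j _ /[!inE] j_lt k /andP[_ kj]; rewrite inE; lia.
by move=> i _ /[!inE] i1_lt; apply: x_incr.
Qed.

Lemma config_leE j k : (j < size p)%N -> (k < size p)%N -> (x j <= x k) = (j <= k)%N.
Proof. exact: le_mono_in config_homo j k. Qed.

Lemma config_ltE j k : (j < size p)%N -> (k < size p)%N -> (x j < x k) = (j < k)%N.
Proof. exact: leW_mono_in (le_mono_in config_homo) j k. Qed.

Lemma config_eqE j k : (j < size p)%N -> (k < size p)%N -> (x j == x k) = (j == k).
Proof. by move=> j_lt k_lt; rewrite eq_le !config_leE // -eqn_leq. Qed.

Lemma config_in k : (k < size p)%N -> 0 < x k < Mx.
Proof.
case: xP => _ x_bound _ k_lt; have p_gt0 : (0 < size p)%N by apply: leq_ltn_trans k_lt.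
have [x0_gt0 xr_lt] := x_bound p_gt0; have r_lt : ((size p).-1 < size p)%N by rewrite prednK.
apply/andP; split.
  by apply: lt_le_trans x0_gt0 _; rewrite config_leE.
by apply: le_lt_trans xr_lt; rewrite config_leE // -ltnS prednK.
Qed.

Lemma config_pos k : (k < size p)%N -> (0 < nth 0%N p k)%N.
Proof. by case: xP => _ _ /all_nthP; apply. Qed.

Lemma chips_at_config k : (k < size p)%N -> chips_at p x (x k) = (nth 0%N p k)%:Z.
Proof.
by move=> k_lt; rewrite /chips_at (big_pred1 (Ordinal k_lt)) // => i /=; rewrite config_eqE.
Qed.

End ChipConfig.

Lemma chips_at_none p x t : (forall k, (k < size p)%N -> x k != t) -> chips_at p x t = 0.
Proof. by move=> x_t; rewrite /chips_at big_pred0 // => k; rewrite (negbTE (x_t k (ltn_ord k))). Qed.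

Lemma chips_at_ge0 p x t : 0 <= chips_at p x t.
Proof. exact: sumr_ge0. Qed.

Lemma chips_at_witness p x t : chips_at p x t != 0 -> exists2 k, (k < size p)%N & x k = t.
Proof.
move=> nz; have /existsP[k /eqP xk] : [exists k : 'I_(size p), x k == t].
  apply: contraNT nz => /existsPn x_t; apply/eqP; rewrite chips_at_none // => k k_lt.
  exact: x_t (Ordinal k_lt).
by exists k.
Qed.

Lemma profile_affine a sg x p u w t :
  (forall k, (k < size p)%N -> ~~ (u < x k < w)) -> u <= t <= w ->
  profile a sg x p t = profile a sg x p u + (profile_slope sg x p u)%:~R * (t - u).
Proof.
move=> no_chip /andP[u_le t_le]; rewrite /profile /profile_slope rmorphD /= rmorph_sum /=.
rewrite mulrDl mulr_suml (big_mkcond (fun k : 'I_(size p) => x k <= u)) /=.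
have -> : \sum_(k < size p) (nth 0%N p k)%:R * (if x k <= t then t - x k else 0) =
          \sum_(k < size p) ((nth 0%N p k)%:R * (if x k <= u then u - x k else 0) +
            (if x k <= u then (nth 0%N p k)%:Z%:~R * (t - u) else 0)) :> R.
  apply: eq_bigr => k _; have := no_chip k (ltn_ord k).
  have [xk_le _|u_lt /= xk_ge] := leP (x k) u.
    by rewrite ifT -?pmulrn; [ring | lra].
  rewrite -leNgt in xk_ge; rewrite mulr0 addr0.
  have [xk_le|] := leP (x k) t; last by rewrite mulr0.
  have -> : x k = t by lra.
  by rewrite subrr mulr0.
by rewrite big_split /=; ring.
Qed.

Lemma profile0 a sg x p : (forall k, (k < size p)%N -> 0 < x k) -> profile a sg x p 0 = a.
Proof.
move=> x_gt0; rewrite /profile mulr0 addr0 big1 ?addr0 // => k _.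
by rewrite leNgt x_gt0 // mulr0.
Qed.

Lemma profile_end a sg x p Mx : (forall k, (k < size p)%N -> x k <= Mx) ->
  profile a sg x p Mx = a + sg%:~R * Mx + (sumn p)%:R * Mx - moment p x.
Proof.
move=> x_le; rewrite /profile /moment natr_sumn mulr_suml.
rewrite (eq_bigr (fun k : 'I_(size p) => (nth 0%N p k)%:R * Mx - (nth 0%N p k)%:R * x k)).
  by rewrite sumrB; ring.
by move=> k _; rewrite x_le //; ring.
Qed.

Definition profile_break Mx x p (i : nat) : R :=
  if i == 0%N then 0 else if (i <= size p)%N then x i.-1 else Mx.

Definition piece_slope sg p (i : nat) : int :=
  sg + \sum_(k < size p | (k < i)%N) (nth 0%N p k)%:Z.

Lemma piece_slope0 sg p : piece_slope sg p 0 = sg.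
Proof. by rewrite /piece_slope big_pred0 ?addr0. Qed.

Lemma piece_slope_size sg p : piece_slope sg p (size p) = sg + (sumn p)%:Z.
Proof.
by rewrite /piece_slope intz_sumn; congr (_ + _); apply: eq_bigl => k; rewrite ltn_ord.
Qed.

Lemma piece_slopeS sg p i : (i < size p)%N ->
  piece_slope sg p i.+1 = piece_slope sg p i + (nth 0%N p i)%:Z.
Proof.
move=> i_lt; rewrite /piece_slope -addrA; congr (_ + _).
rewrite (bigID (fun k : 'I_(size p) => (k < i)%N)) /=; congr (_ + _).
  by apply: eq_bigl => k; lia.
by rewrite (big_pred1 (Ordinal i_lt)) // => k /=; rewrite -(inj_eq val_inj) /=; lia.
Qed.

Section ProfilePieces.
Variables (Mx : R) (p : seq nat) (x : nat -> R).
Hypotheses (xP : chip_config Mx p x) (Mx_gt0 : 0 < Mx).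
Local Notation break := (profile_break Mx x p).

Lemma profile_break_free k i : (k < size p)%N -> (i <= size p)%N ->
  ~~ (break i < x k < break i.+1).
Proof.
move=> k_lt i_le; rewrite /profile_break /=; case: i i_le => [|i] i_le /=.
  have p_gt0 : (0 < size p)%N by apply: leq_ltn_trans k_lt.
  by rewrite p_gt0 (config_ltE xP) // ltn0 andbF.
rewrite i_le (config_ltE xP) //.
by case: ifP => i1_lt; rewrite ?(config_ltE xP) //; apply/negP => /andP[? ?]; lia.
Qed.

Lemma profile_slope_break sg i : (i <= size p)%N ->
  profile_slope sg x p (break i) = piece_slope sg p i.
Proof.
move=> i_le; rewrite /profile_slope /piece_slope /profile_break; congr (_ + _).
apply: eq_bigl => k; case: i i_le => [|i] i_le /=.
  by rewrite leNgt; have /andP[-> _] := config_in xP (ltn_ord k).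
by rewrite i_le (config_leE xP).
Qed.

Lemma profile_piecewise a sg :
  piecewise_linear (profile a sg x p) Mx (size p).+1 break (piece_slope sg p).
Proof.
split; rewrite /profile_break ?eqxx ?ltnn //.
  move=> [|i] i_lt /=.
    by case: ifP => // p_gt0; have /andP[] := config_in xP p_gt0.
  rewrite ltnS in i_lt; rewrite i_lt; case: ifP => [i1_lt|_].
    by case: xP => x_incr _ _; apply: x_incr.
  by have /andP[] := config_in xP i_lt.
move=> i t i_lt t_in; rewrite -profile_slope_break //.
by apply: profile_affine t_in => k k_lt; apply: profile_break_free.
Qed.

Section Slopes.
Variables (g : R -> R) (a : R) (sg : int).
Hypothesis g_profile : forall t, 0 <= t <= Mx -> g t = profile a sg x p t.

Let gP : piecewise_linear g Mx (size p).+1 break (piece_slope sg p).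
Proof. by apply: eq_piecewise_linear (profile_piecewise a sg) _ => t /g_profile. Qed.

Lemma profile_rslope0 : rslope g 0 = sg.
Proof.
rewrite (piecewise_rslope (i := 0%N) gP) ?piece_slope0 //.
by rewrite /profile_break /= lexx; have [_ _ /(_ 0%N) ->] := gP.
Qed.

Lemma profile_lslope_end : lslope g Mx = sg + (sumn p)%:Z.
Proof.
rewrite (piecewise_lslope (i := size p) gP) ?piece_slope_size //.
have [_ bn b_incr _] := gP; have := b_incr (size p) (ltnSn _).
by rewrite bn => ->; rewrite lexx.
Qed.

Lemma profile_jump t : 0 < t < Mx -> rslope g t - lslope g t = chips_at p x t.
Proof.
move=> t_in; have [_ _ b_incr _] := gP.
case: (piecewise_interior gP t_in) => [[[|i] [// _ i1_lt ->]]|[i i_lt /andP[bi_lt t_lt]]].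
  have i_lt : (i < (size p).+1)%N by apply: ltnW.
  rewrite (piecewise_rslope (i := i.+1) gP) ?lexx ?b_incr //.
  rewrite (piecewise_lslope (i := i) gP) ?lexx ?b_incr //.
  rewrite piece_slopeS // addrC addKr /profile_break /= ifT //.
  by rewrite (chips_at_config xP).
rewrite (piecewise_rslope (i := i) gP) ?(ltW bi_lt) //.
rewrite (piecewise_lslope (i := i) gP) ?bi_lt ?(ltW t_lt) //.
rewrite subrr chips_at_none // => k k_lt; rewrite ltnS in i_lt.
by apply: contraNneq (profile_break_free k_lt i_lt) => ->; rewrite bi_lt.
Qed.

End Slopes.
End ProfilePieces.

Lemma profile_slope_next sg x p u w :
  u < w -> (forall k, (k < size p)%N -> ~~ (u < x k < w)) ->
  profile_slope sg x p w = profile_slope sg x p u + chips_at p x w.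
Proof.
move=> uw no_chip; rewrite /profile_slope /chips_at -addrA; congr (_ + _).
rewrite (big_mkcond (fun k : 'I_(size p) => x k <= w)).
rewrite (big_mkcond (fun k : 'I_(size p) => x k <= u)).
rewrite (big_mkcond (fun k : 'I_(size p) => x k == w)) -big_split.
apply: eq_bigr => k _ /=.
have := no_chip k (ltn_ord k); have [xk_le _|u_lt /= xk_ge] := leP (x k) u.
  by rewrite (le_trans xk_le (ltW uw)) (lt_eqF (le_lt_trans xk_le uw)) addr0.
by rewrite le_eqVlt (negbTE xk_ge) orbF add0r.
Qed.

Section ProfileUnique.
Variables (g : R -> R) (Mx : R) (n : nat) (b : nat -> R) (s : nat -> int).
Variables (p : seq nat) (x : nat -> R) (sg : int).
Hypotheses (Mx_gt0 : 0 < Mx) (gP : piecewise_linear g Mx n b s) (xP : chip_config Mx p x).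
Hypothesis g_rslope0 : rslope g 0 = sg.
Hypothesis g_jump : forall t, 0 < t < Mx -> rslope g t - lslope g t = chips_at p x t.

Lemma piece_chip_free i k : (i < n)%N -> (k < size p)%N -> ~~ (b i < x k < b i.+1).
Proof.
move=> i_lt k_lt; apply/negP => /andP[bi_lt xk_lt].
have := g_jump (config_in xP k_lt); rewrite (chips_at_config xP k_lt).
rewrite (piecewise_rslope (i := i) gP) ?(ltW bi_lt) //.
rewrite (piecewise_lslope (i := i) gP) ?bi_lt ?(ltW xk_lt) // subrr.
by have := config_pos xP k_lt; lia.
Qed.

Lemma piece_slope_profile i : (i < n)%N -> s i = profile_slope sg x p (b i).
Proof.
have [b0 bn b_incr _] := gP.
elim: i => [|i IH] i_lt.
  rewrite b0 /profile_slope big_pred0 ?addr0; last first.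
    by move=> k; rewrite leNgt; have /andP[-> _] := config_in xP (ltn_ord k).
  by rewrite -g_rslope0 (piecewise_rslope gP i_lt) // -b0 lexx b_incr.
have i_lt' : (i < n)%N by apply: ltnW.
have bi1_in : 0 < b i.+1 < Mx.
  by rewrite -{1}b0 -bn !(break_lt gP) ?inE // ltnW.
have := g_jump bi1_in.
rewrite (piecewise_rslope gP i_lt) ?lexx ?b_incr //.
rewrite (piecewise_lslope gP i_lt') ?lexx ?b_incr //.
rewrite (profile_slope_next _ (b_incr i i_lt')); last by move=> k; apply: piece_chip_free.
by rewrite -IH // => <-; rewrite addrC subrK.
Qed.

Lemma piecewise_break_profile i : (i <= n)%N -> g (b i) = profile (g 0) sg x p (b i).
Proof.
have [b0 _ b_incr g_lin] := gP.
elim: i => [|i IH] i_lt.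
  by rewrite b0 profile0 // => k k_lt; have /andP[] := config_in xP k_lt.
have bi_le : b i <= b i.+1 <= b i.+1 by rewrite lexx ltW ?b_incr.
rewrite (g_lin i (b i.+1) i_lt bi_le) (IH (ltnW i_lt)) piece_slope_profile //.
by rewrite -(profile_affine _ _ _ bi_le) // => k; apply: piece_chip_free.
Qed.

Lemma piecewise_eq_profile t : 0 <= t <= Mx -> g t = profile (g 0) sg x p t.
Proof.
move=> t_in; have [_ _ _ g_lin] := gP.
have [i i_lt t_piece] := piecewise_piece gP Mx_gt0 t_in.
rewrite (g_lin i t i_lt t_piece) (piecewise_break_profile (ltnW i_lt)) piece_slope_profile //.
by rewrite -(profile_affine _ _ _ t_piece) // => k; apply: piece_chip_free.
Qed.

End ProfileUnique.

End Profile.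

Section Regroup.
Variable R : realType.

Lemma config_mean_in (Mx : R) p x : chip_config Mx p x -> p != [::] ->
  0 < moment p x / (sumn p)%:R < Mx.
Proof.
move=> xP p_nil; have p_gt0 : (0 < size p)%N by rewrite lt0n size_eq0.
have r_lt : ((size p).-1 < size p)%N by rewrite prednK.
have C_gt0 : 0 < (sumn p)%:R :> R.
  by case: xP => _ _ p_pos; rewrite ltr0n sumn_pos_gt0.
have /andP[x0_gt0 _] := config_in xP p_gt0; have /andP[_ xr_lt] := config_in xP r_lt.
have mass_ge0 k : 0 <= (nth 0%N p k)%:R :> R by rewrite ler0n.
have moment_ge : (sumn p)%:R * x 0%N <= moment p x.
  rewrite natr_sumn mulr_suml; apply: ler_sum => k _.
  by apply: ler_wpM2l => //; rewrite (config_leE xP).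
have moment_le : moment p x <= (sumn p)%:R * x (size p).-1.
  rewrite natr_sumn mulr_suml; apply: ler_sum => k _.
  by apply: ler_wpM2l => //; rewrite (config_leE xP) // -ltnS prednK.
rewrite ltr_pdivrMr // ltr_pdivlMr // mul0r (mulrC Mx).
by rewrite (lt_le_trans (mulr_gt0 C_gt0 x0_gt0)) // (le_lt_trans moment_le) ?ltr_pM2l.
Qed.

Lemma mean_index_bounds q : all (fun k => 0 < k)%N q -> q != [::] ->
  0 <= moment q (fun k => k%:R : R) / (sumn q)%:R <= (size q)%:R - 1.
Proof.
move=> q_pos q_nil; have C_gt0 : 0 < (sumn q)%:R :> R by rewrite ltr0n sumn_pos_gt0.
apply/andP; split.
  by apply: divr_ge0 (ltW C_gt0); apply: sumr_ge0 => k _; apply: mulr_ge0.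
rewrite ler_pdivrMr // natr_sumn mulr_sumr; apply: ler_sum => k _.
by rewrite mulrC; apply: ler_wpM2r; rewrite // lerBrDr natr1 ler_nat.
Qed.

(* The witness: equally spaced chips [m + e (k - mu)], with [mu] the mean index of [q],
   have mean [m], and stay inside [(0, Mx)] for [e] small enough. *)
Lemma exists_config_mean (Mx m : R) q : all (fun k => 0 < k)%N q -> 0 < m < Mx ->
  exists y, chip_config Mx q y /\ moment q y = (sumn q)%:R * m.
Proof.
move=> q_pos /andP[m_gt0 m_lt].
have [->|q_nil] := eqVneq q [::].
  by exists (fun=> m); split; [split | rewrite /moment big_ord0 mul0r].
set r : R := (size q)%:R; set C : R := (sumn q)%:R.
set mu := moment q (fun k => k%:R) / C.
have /andP[mu_ge0 mu_le] : 0 <= mu <= r - 1 := mean_index_bounds q_pos q_nil.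
have k_le k : (k < size q)%N -> k%:R <= r - 1 :> R by rewrite lerBrDr natr1 ler_nat.
set d := Num.min m (Mx - m).
have d_gt0 : 0 < d by rewrite lt_min m_gt0 subr_gt0.
have d_le_m : d <= m by rewrite ge_min lexx.
have d_le_Mm : d <= Mx - m by rewrite ge_min lexx orbT.
set e := d / r.
have e_gt0 : 0 < e by rewrite divr_gt0 // ltr0n lt0n size_eq0.
have er : e * r = d by rewrite divfK // pnatr_eq0 size_eq0.
have y_in k : (k < size q)%N -> 0 < m + e * (k%:R - mu) < Mx.
  move=> /k_le k_le'; have k_ge0 : 0 <= k%:R :> R by [].
  have up : e * (k%:R - mu) < d by rewrite -er ltr_pM2l //; lra.
  have lo : - d < e * (k%:R - mu) by rewrite -er -mulrN ltr_pM2l //; lra.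
  by apply/andP; split; lra.
exists (fun k => m + e * (k%:R - mu)); split.
  split => // [i i1_lt|q_gt0]; first by rewrite ltrD2l ltr_pM2l // ltrD2r ltr_nat.
  have /andP[? _] := y_in 0%N q_gt0.
  by have /andP[_ ?] := y_in (size q).-1 (ltac:(by rewrite prednK)).
rewrite /moment (eq_bigr (fun k : 'I_(size q) =>
  m * (nth 0%N q k)%:R + e * ((nth 0%N q k)%:R * k%:R) - e * mu * (nth 0%N q k)%:R)).
  rewrite sumrB big_split /= -!mulr_sumr -natr_sumn -/C /mu /moment.
  by field; rewrite lt0r_neq0 ?ltr0n ?sumn_pos_gt0.
by move=> k _; ring.
Qed.

Lemma exists_config_moment (Mx : R) p x q : chip_config Mx p x ->
  all (fun k => 0 < k)%N q -> sumn q = sumn p ->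
  exists y, chip_config Mx q y /\ moment q y = moment p x.
Proof.
move=> xP q_pos sum_qp; have [p0|p_nil] := eqVneq p [::].
  have : ~~ (0 < sumn q)%N by rewrite sum_qp p0.
  by rewrite sumn_pos_gt0 // negbK p0 => /eqP ->; exists x; split; first split.
have [y [yP my]] := exists_config_mean q_pos (config_mean_in xP p_nil).
exists y; split => //; rewrite my sum_qp mulrC divfK // pnatr_eq0 -lt0n sumn_pos_gt0 //.
by case: xP.
Qed.

End Regroup.

Section MetricGraphCells.
Variables (R : realType) (V E : finType) (src tgt : E -> V) (M : E -> R).
Hypothesis M_gt0 : forall e, 0 < M e.
Variable D : point R V E -> int.
Hypothesis D_vs : vertex_supported D.

Local Notation addpdiv := (addpdiv src tgt M D).
Local Notation RD := (RD src tgt M D).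
Local Notation in_cell := (in_cell src tgt M D).
Local Notation is_cell := (is_cell src tgt M D).
Local Notation fe := (fe src tgt M).
Local Notation out0 := (out0 src tgt M).
Local Notation out1 := (out1 src tgt M).

Definition edge_chips (L : point R V E -> int) e p (x : nat -> R) : Prop :=
  chip_config (M e) p x /\ forall t, interior M e t -> L (PE V e t) = chips_at p x t.

Lemma edge_confP L e p : all (fun k => 0 < k)%N p -> edge_conf M L e p ->
  exists x, edge_chips L e p x.
Proof. by move=> p_pos [x [x_incr x_bound Lx]]; exists x; split. Qed.

Lemma edge_chips_conf L e p x : edge_chips L e p x -> edge_conf M L e p.
Proof. by move=> [[x_incr x_bound _] Lx]; exists x. Qed.

Lemma addpdiv_interior f e t : interior M e t ->
  addpdiv f (PE V e t) = rslope (fe f e) t - lslope (fe f e) t.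
Proof. by move=> et; rewrite /Defs.addpdiv D_vs add0r /pdiv /= et. Qed.

Lemma addpdiv_junk f e t : ~~ interior M e t -> addpdiv f (PE V e t) = 0.
Proof. by move=> et; rewrite /Defs.addpdiv D_vs add0r /pdiv /= (negbTE et). Qed.

Lemma addpdiv_ext f1 f2 p x :
  (forall v, addpdiv f1 (PV R E v) = addpdiv f2 (PV R E v)) ->
  (forall e, edge_chips (addpdiv f1) e (p e) (x e)) ->
  (forall e, edge_chips (addpdiv f2) e (p e) (x e)) ->
  addpdiv f1 = addpdiv f2.
Proof.
move=> f12 f1x f2x; apply: functional_extensionality => -[v|e t]; first exact: f12.
have [et|et] := boolP (interior M e t); last by rewrite !addpdiv_junk.
by rewrite (proj2 (f1x e) t et) (proj2 (f2x e) t et).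
Qed.

Lemma fe_src f e : fe f e 0 = f (PV R E (src e)).
Proof. by rewrite /Defs.fe lexx. Qed.

Lemma fe_tgt f e : fe f e (M e) = f (PV R E (tgt e)).
Proof. by rewrite /Defs.fe lexx leNgt M_gt0. Qed.

Lemma fe_profile f p x e : ratfun src tgt M f -> edge_chips (addpdiv f) e p x ->
  forall t, 0 <= t <= M e -> fe f e t = profile (f (PV R E (src e))) (out0 f e) x p t.
Proof.
move=> f_rat [xP fx]; have [n [b [s [b0 bn b_incr f_lin]]]] := f_rat e.
have fP : piecewise_linear (fe f e) (M e) n b s by split.
rewrite -fe_src; apply: (piecewise_eq_profile (M_gt0 e) fP xP) => // t et.
by rewrite -addpdiv_interior // fx.
Qed.

Lemma out1_chips f p x e : ratfun src tgt M f -> edge_chips (addpdiv f) e p x ->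
  out1 f e = - (out0 f e + (sumn p)%:Z).
Proof.
move=> f_rat fx.
by rewrite /Defs.out1 (profile_lslope_end (proj1 fx) (M_gt0 e) (fe_profile f_rat fx)).
Qed.

Definition reshape (f : point R V E -> R) (q : E -> seq nat) (y : E -> nat -> R) :
    point R V E -> R :=
  fun z => match z with
           | PV v => f (PV R E v)
           | PE e t => profile (f (PV R E (src e))) (out0 f e) (y e) (q e) t
           end.

Section Reshape.
Variables (f : point R V E -> R) (p q : E -> seq nat) (x y : E -> nat -> R).
Hypotheses (fR : RD f) (fx : forall e, edge_chips (addpdiv f) e (p e) (x e)).
Hypotheses (yP : forall e, chip_config (M e) (q e) (y e)).
Hypotheses (sum_qp : forall e, sumn (q e) = sumn (p e)).
Hypotheses (moment_qp : forall e, moment (q e) (y e) = moment (p e) (x e)).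
Local Notation f' := (reshape f q y).

Lemma fe_reshape e : forall t, 0 <= t <= M e ->
  fe f' e t = profile (f (PV R E (src e))) (out0 f e) (y e) (q e) t.
Proof.
move=> t /andP[t_ge0 t_le]; rewrite /Defs.fe; have [t_le0|t_gt0] := leP t 0.
  have -> : t = 0 by apply/eqP; rewrite eq_le t_le0.
  by rewrite profile0 // => k k_lt; have /andP[] := config_in (yP e) k_lt.
have [Me_le|//] := leP (M e) t.
have -> : t = M e by apply/eqP; rewrite eq_le Me_le t_le.
rewrite /= -(fe_tgt f e) (fe_profile fR.1 (fx e)) ?lexx ?ltW ?M_gt0 //.
have x_le k : (k < size (p e))%N -> x e k <= M e.
  by move=> k_lt; have /andP[_ /ltW] := config_in (proj1 (fx e)) k_lt.
have y_le k : (k < size (q e))%N -> y e k <= M e.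
  by move=> k_lt; have /andP[_ /ltW] := config_in (yP e) k_lt.
by rewrite !profile_end // sum_qp moment_qp.
Qed.

Lemma reshape_out0 e : out0 f' e = out0 f e.
Proof. by have := profile_rslope0 (yP e) (M_gt0 e) (@fe_reshape e). Qed.

Lemma reshape_out1 e : out1 f' e = out1 f e.
Proof.
rewrite (out1_chips fR.1 (fx e)) /Defs.out1.
by rewrite (profile_lslope_end (yP e) (M_gt0 e) (@fe_reshape e)) sum_qp.
Qed.

Lemma reshape_vertex v : addpdiv f' (PV R E v) = addpdiv f (PV R E v).
Proof.
rewrite /Defs.addpdiv /pdiv; congr (_ + (_ + _)); apply: eq_bigr => e _.
  exact: reshape_out0.
exact: reshape_out1.
Qed.

Lemma reshape_chips e : edge_chips (addpdiv f') e (q e) (y e).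
Proof.
split => // t et; rewrite addpdiv_interior //.
by have := profile_jump (yP e) (M_gt0 e) (@fe_reshape e) et.
Qed.

Lemma reshape_RD : RD f'.
Proof.
split.
  move=> e; have [] := eq_piecewise_linear
    (profile_piecewise (yP e) (M_gt0 e) (f (PV R E (src e))) (out0 f e))
    (fun t et => esym (fe_reshape et)).
  by exists (size (q e)).+1, (profile_break (M e) (y e) (q e)), (piece_slope (out0 f e) (q e)).
case=> [v|e t]; first by rewrite reshape_vertex; apply: fR.2.
have [et|et] := boolP (interior M e t); last by rewrite addpdiv_junk.
by rewrite (proj2 (reshape_chips e) t et) chips_at_ge0.
Qed.

End Reshape.

Local Notation positive_parts C := (forall e, all (fun k => 0 < k)%N (cd_p C e)).

Lemma in_cell_regroup C1 L1 C2 : in_cell C1 L1 -> positive_parts C1 -> positive_parts C2 ->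
  cd_v C2 = cd_v C1 -> cd_m C2 = cd_m C1 -> (forall e, sumn (cd_p C2 e) = sumn (cd_p C1 e)) ->
  exists N, in_cell C2 N /\ forall v, N (PV R E v) = L1 (PV R E v).
Proof.
move=> [[f fR ->] L1v L1conf L1m] C1_pos C2_pos v21 m21 sum21.
have [x fx] := fin_all_exists (fun e => edge_confP (C1_pos e) (L1conf e)).
have [y y_spec] :=
  fin_all_exists (fun e => exists_config_moment (proj1 (fx e)) (C2_pos e) (sum21 e)).
have yP i := proj1 (y_spec i); have moment21 i := proj2 (y_spec i).
set f' := reshape f (cd_p C2) y.
have f'R : RD f' := reshape_RD fR fx yP sum21 moment21.
have f'v v : addpdiv f' (PV R E v) = addpdiv f (PV R E v).
  exact: reshape_vertex fR fx yP sum21 moment21 v.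
exists (addpdiv f'); split => //; split => [||e|g gR Ng e].
- by exists f'.
- by move=> v; rewrite f'v L1v v21.
- exact: edge_chips_conf (reshape_chips fR fx yP sum21 moment21 e).
(* Reshaping any representative [g] of [N] back to the chips of [L1] shows that its
   slopes are those prescribed by [C1]. *)
have gy i : edge_chips (addpdiv g) i (cd_p C2 i) (y i) by rewrite -Ng; apply: reshape_chips.
have xP i : chip_config (M i) (cd_p C1 i) (x i) := proj1 (fx i).
have sum12 i : sumn (cd_p C1 i) = sumn (cd_p C2 i) by rewrite sum21.
have moment12 i : moment (cd_p C1 i) (x i) = moment (cd_p C2 i) (y i) by rewrite moment21.
rewrite -(reshape_out0 gR gy xP sum12 moment12) m21.
apply: (L1m _ (reshape_RD gR gy xP sum12 moment12)).
apply: (addpdiv_ext (p := cd_p C1) (x := x)) => // [v|i].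
  by rewrite (reshape_vertex gR gy xP sum12 moment12) -Ng f'v.
exact: (reshape_chips gR gy xP sum12 moment12).
Qed.

Local Notation is_anchor_cell := (is_anchor_cell src tgt M D).

Lemma small_parts_anchor C L : in_cell C L -> (forall e, size (cd_p C e) <= 1)%N ->
  anchor_divisor M L.
Proof.
move=> [_ _ Lconf _] C_small e t1 t2 et1 et2.
have [x [_ _ Lx]] := Lconf e; rewrite !Lx // !lt_def => /andP[n1 _] /andP[n2 _].
have [k1 k1_lt <-] := chips_at_witness n1; have [k2 k2_lt <-] := chips_at_witness n2.
have := C_small e => C_small_e.
have -> : k1 = 0%N by lia.
by have -> : k2 = 0%N by lia.
Qed.

Lemma anchor_cell_small C : is_anchor_cell C -> forall e, (size (cd_p C e) <= 1)%N.
Proof.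
move=> [[C_pos [L CL]] C_anchor] e; rewrite leqNgt; apply/negP => size_gt1.
have [_ _ Lconf _] := CL; have [x [xP Lx]] := edge_confP (C_pos e) (Lconf e).
have size_gt0 : (0 < size (cd_p C e))%N by apply: ltn_trans size_gt1.
have x0_in := config_in xP size_gt0; have x1_in := config_in xP size_gt1.
have := C_anchor L CL e (x 0%N) (x 1%N) x0_in x1_in.
rewrite !Lx // !(chips_at_config xP) // !ltz_nat !(config_pos xP) //.
by move=> /(_ isT isT) /eqP; rewrite (config_eqE xP).
Qed.

Definition anchor_of (C : cdata V E) : cdata V E :=
  ((cd_v C, [ffun e => if cd_p C e is [::] then [::] else [:: sumn (cd_p C e)]]), cd_m C).

Lemma anchor_of_p C e :
  cd_p (anchor_of C) e = if cd_p C e is [::] then [::] else [:: sumn (cd_p C e)].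
Proof. by rewrite /cd_p /= ffunE. Qed.

Lemma anchor_of_pos C : positive_parts C -> positive_parts (anchor_of C).
Proof.
move=> C_pos e; rewrite anchor_of_p; have := C_pos e.
by case: (cd_p C e) => //= k s /andP[k_gt0 _]; rewrite addn_gt0 k_gt0.
Qed.

Lemma sumn_anchor_of C e : sumn (cd_p (anchor_of C) e) = sumn (cd_p C e).
Proof. by rewrite anchor_of_p; case: (cd_p C e) => //= k s; rewrite addn0. Qed.

Lemma anchor_of_small C e : (size (cd_p (anchor_of C) e) <= 1)%N.
Proof. by rewrite anchor_of_p; case: (cd_p C e). Qed.

Lemma anchor_of_spec C : is_cell C ->
  is_anchor_cell (anchor_of C) /\
  forall L, in_cell C L ->
    exists N, [/\ in_cell (anchor_of C) N,
                  forall v, N (PV R E v) = L (PV R E v) &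
                  forall f g, RD f -> RD g -> L = addpdiv f -> N = addpdiv g ->
                    forall e, out0 f e = out0 g e /\ out1 f e = out1 g e].
Proof.
move=> [C_pos [L0 CL0]].
have regroup L : in_cell C L ->
    exists N, in_cell (anchor_of C) N /\ forall v, N (PV R E v) = L (PV R E v).
  move=> CL; apply: (in_cell_regroup CL C_pos (anchor_of_pos C_pos)) => // e.
  exact: sumn_anchor_of.
split.
  split; first by split; [apply: anchor_of_pos | have [N [AN _]] := regroup L0 CL0; exists N].
  by move=> L AL; apply: small_parts_anchor AL (anchor_of_small C).
move=> L CL; have [N [AN NLv]] := regroup L CL; exists N; split => // f g fR gR Lf Ng e.
have [_ _ Lconf Lm] := CL; have [_ _ Nconf Nm] := AN.
have out0_fg : out0 f e = out0 g e by rewrite (Lm f fR Lf) (Nm g gR Ng).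
have [x fx] := edge_confP (C_pos e) (Lconf e).
have [x' gx'] := edge_confP (anchor_of_pos C_pos e) (Nconf e).
rewrite Lf in fx; rewrite Ng in gx'.
by rewrite (out1_chips fR.1 fx) (out1_chips gR.1 gx') sumn_anchor_of out0_fg.
Qed.

Definition uncut_components (k : E -> nat) : nat :=
  n_comp (fun u v : V => [exists e : E, (k e == 0%N) &&
                   (((src e == u) && (tgt e == v)) || ((src e == v) && (tgt e == u)))])
         [pred _ : V | true].

Lemma edge_chips_support L e p x : edge_chips L e p x -> exists s : seq R,
  [/\ uniq s, size s = size p & forall t, (t \in s) = interior M e t && (0 < L (PE V e t))].
Proof.
move=> [xP Lx]; exists (map x (iota 0 (size p))); split.
- rewrite map_inj_in_uniq ?iota_uniq // => i j.
  rewrite !mem_iota !add0n => /andP[_ i_lt] /andP[_ j_lt] /eqP.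
  by rewrite (config_eqE xP) // => /eqP.
- by rewrite size_map size_iota.
move=> t; apply/mapP/andP => [[k]|[et]].
  rewrite mem_iota add0n => /andP[_ k_lt] ->; have xk_in := config_in xP k_lt.
  by split => //; rewrite Lx // (chips_at_config xP) // ltz_nat (config_pos xP).
rewrite Lx // lt_def => /andP[/chips_at_witness[k k_lt <-] _].
by exists k; rewrite // mem_iota add0n k_lt.
Qed.

Lemma ncomp_complE C L n : in_cell C L -> positive_parts C ->
  ncomp_compl src tgt M L n <->
  n = (\sum_(e : E) (size (cd_p C e)).-1 + uncut_components (fun e => size (cd_p C e)))%N.
Proof.
move=> [_ _ Lconf _] C_pos.
have Lx e : exists x, edge_chips L e (cd_p C e) x := edge_confP (C_pos e) (Lconf e).
split => [[k [k_spec ->]]|->].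
  suff -> : k = (fun e => size (cd_p C e)) by [].
  apply: functional_extensionality => e.
  have [s [s_uniq <- s_mem]] := k_spec e; have [x ex] := Lx e.
  have [s' [s'_uniq <- s'_mem]] := edge_chips_support ex.
  by apply: perm_size; apply: uniq_perm => // t; rewrite s_mem s'_mem.
exists (fun e => size (cd_p C e)); split => // e.
by have [x ex] := Lx e; apply: edge_chips_support ex.
Qed.

Definition gaps (A : cdata V E) (e : E) : nat := if cd_p A e is [:: c] then c.-1 else 0%N.

Local Notation gap A := {e : E & 'I_(gaps A e)}.

Definition cut_bits (A : cdata V E) (B : {set gap A}) (e : E) : seq bool :=
  [seq Tagged (fun e => 'I_(gaps A e)) i \in B | i <- enum 'I_(gaps A e)].

Definition cut_cell (A : cdata V E) (B : {set gap A}) : cdata V E :=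
  ((cd_v A, [ffun e => if cd_p A e is [:: _] then comp_of_bits (cut_bits B e) else [::]]),
   cd_m A).

Lemma card_gap A : #|{: gap A}| = s_anchor A.
Proof.
by rewrite card_tagged sumnE big_map big_enum; apply: eq_bigr => e _; rewrite card_ord.
Qed.

Lemma cdata_ext (C1 C2 : cdata V E) :
  cd_v C1 = cd_v C2 -> cd_p C1 = cd_p C2 -> cd_m C1 = cd_m C2 -> C1 = C2.
Proof. by case: C1 C2 => [[? ?] ?] [[? ?] ?]; rewrite /cd_v /cd_p /cd_m /= => -> -> ->. Qed.

Lemma uncut_components_ext k1 k2 : (forall e, (k1 e == 0%N) = (k2 e == 0%N)) ->
  uncut_components k1 = uncut_components k2.
Proof.
move=> k12; apply: (congr1 (fun r : rel V => n_comp r [pred _ : V | true])).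
by do 2!apply: functional_extensionality => ?; apply: eq_existsb => e; rewrite k12.
Qed.

Section AnchorFiber.
Variable A : cdata V E.
Hypothesis A_anchor : is_anchor_cell A.

Let A_pos : positive_parts A := A_anchor.1.1.

Lemma anchor_parts e : cd_p A e = [::] \/ cd_p A e = [:: (gaps A e).+1].
Proof.
have := anchor_cell_small A_anchor e; have := A_pos e; rewrite /gaps.
case: (cd_p A e) => [|c [|//]]; first by left.
by rewrite /= andbT => c_gt0 _; rewrite prednK //; right.
Qed.

Lemma size_cut_bits (B : {set gap A}) e : size (cut_bits B e) = gaps A e.
Proof. by rewrite size_map size_enum_ord. Qed.

Lemma nth_cut_bits (B : {set gap A}) e i (i_lt : (i < gaps A e)%N) :
  nth false (cut_bits B e) i = (Tagged (fun e => 'I_(gaps A e)) (Ordinal i_lt) \in B).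
Proof.
rewrite (nth_map (Ordinal i_lt)) ?size_enum_ord //.
by congr (Tagged _ _ \in B); apply: val_inj; rewrite /= nth_enum_ord.
Qed.

Lemma sum_count_cut_bits (B : {set gap A}) : (\sum_(e : E) count id (cut_bits B e))%N = #|B|.
Proof.
under eq_bigr => e _ do rewrite count_map -sum1_count big_enum_cond.
rewrite (@sig_big_dep _ _ _ E (fun e => 'I_(gaps A e)) predT
  (fun e j => Tagged (fun e => 'I_(gaps A e)) j \in B) (fun _ _ => 1%N)).
by rewrite -sum1_card; apply: eq_bigl => -[e i].
Qed.

Lemma cut_cell_p (B : {set gap A}) e :
  cd_p (cut_cell B) e = if cd_p A e is [:: _] then comp_of_bits (cut_bits B e) else [::].
Proof. by rewrite /cd_p /= ffunE. Qed.

Lemma cut_cell_pos (B : {set gap A}) : positive_parts (cut_cell B).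
Proof.
by move=> e; rewrite cut_cell_p; case: (anchor_parts e) => ->; rewrite ?comp_of_bits_pos.
Qed.

Lemma sumn_cut_cell (B : {set gap A}) e : sumn (cd_p (cut_cell B) e) = sumn (cd_p A e).
Proof.
rewrite cut_cell_p; case: (anchor_parts e) => -> //=.
by rewrite sumn_comp_of_bits size_cut_bits addn0.
Qed.

Lemma anchor_of_cut_cell (B : {set gap A}) : anchor_of (cut_cell B) = A.
Proof.
apply: cdata_ext => //; apply/ffunP => e; rewrite -/(cd_p _ e) anchor_of_p cut_cell_p.
case: (anchor_parts e) => -> //=; have [h [t ht]] := comp_of_bits_head (cut_bits B e).
by rewrite ht -ht sumn_comp_of_bits size_cut_bits.
Qed.

Lemma cut_cell_inj : injective (@cut_cell A).
Proof.
move=> B1 B2 B12; apply/setP => -[e i].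
have := congr1 (fun C => cd_p C e) B12; rewrite /= !cut_cell_p.
case: (anchor_parts e) => Ae; last first.
  rewrite Ae => /comp_of_bits_inj /(congr1 (fun s => nth false s i)).
  by rewrite !nth_cut_bits; have -> : Ordinal (ltn_ord i) = i by apply: val_inj.
have gaps0 : gaps A e = 0%N by rewrite /gaps Ae.
by have := ltn_ord i; rewrite [in X in (_ < X)%N]gaps0.
Qed.

Lemma cut_cell_onto C : is_cell C -> anchor_of C = A -> exists B : {set gap A}, C = cut_cell B.
Proof.
move=> [C_pos _] CA.
have C_bits e : exists bs : seq bool, size bs = gaps A e /\
    (cd_p A e != [::] -> comp_of_bits bs = cd_p C e).
  have := congr1 (fun C => cd_p C e) CA; rewrite /= anchor_of_p.
  case: (anchor_parts e) => Ae; rewrite Ae; first by exists [::]; rewrite /gaps Ae.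
  case Ce: (cd_p C e) => [//|k s] [sum_C].
  have [bs bs_size bsC] := comp_of_bits_onto (C_pos e) (ltac:(by rewrite Ce)).
  by exists bs; rewrite bs_size bsC Ce /= sum_C.
have [bs bs_spec] := fin_all_exists C_bits.
exists [set g : gap A | nth false (bs (tag g)) (tagged g)].
apply: cdata_ext => //.
- by rewrite -CA.
- apply/ffunP => e; rewrite -/(cd_p _ e) cut_cell_p.
  have [bs_size bsC] := bs_spec e.
  have -> : cut_bits [set g : gap A | nth false (bs (tag g)) (tagged g)] e = bs e.
    apply: (@eq_from_nth _ false); first by rewrite size_cut_bits bs_size.
    by move=> i; rewrite size_cut_bits => i_lt; rewrite nth_cut_bits inE.
  case: (anchor_parts e) => Ae; rewrite Ae ?bsC ?Ae //.
  by have := congr1 (fun C => cd_p C e) CA; rewrite /= anchor_of_p Ae; case: (cd_p C e).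
- by rewrite -CA.
Qed.

Lemma cut_cell_is_cell (B : {set gap A}) : is_cell (cut_cell B).
Proof.
split; first exact: cut_cell_pos.
have [[_ [N0 AN0]] _] := A_anchor.
have [N [BN _]] :=
  in_cell_regroup AN0 A_pos (cut_cell_pos B) (erefl _) (erefl _) (sumn_cut_cell B).
by exists N.
Qed.

Lemma anchor_extra_parts : (\sum_(e : E) (size (cd_p A e)).-1)%N = 0%N.
Proof. by rewrite big1 // => e _; case: (anchor_parts e) => ->. Qed.

Lemma cut_cell_extra_parts (B : {set gap A}) :
  (\sum_(e : E) (size (cd_p (cut_cell B) e)).-1)%N = #|B|.
Proof.
rewrite -sum_count_cut_bits; apply: eq_bigr => e _; rewrite cut_cell_p.
case: (anchor_parts e) => Ae; rewrite Ae ?size_comp_of_bits //.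
by have := size_cut_bits B e; rewrite /gaps Ae; case: (cut_bits B e).
Qed.

Lemma uncut_components_cut_cell (B : {set gap A}) :
  uncut_components (fun e => size (cd_p (cut_cell B) e)) =
  uncut_components (fun e => size (cd_p A e)).
Proof.
apply: uncut_components_ext => e; rewrite cut_cell_p.
by case: (anchor_parts e) => -> //; have [h [t ->]] := comp_of_bits_head (cut_bits B e).
Qed.

Lemma cut_cell_dim dA (B : {set gap A}) k : cell_dim src tgt M D A dA ->
  cell_dim src tgt M D (cut_cell B) k <-> k = (#|B| + dA)%N.
Proof.
move=> [LA ALA ncA]; have := (ncomp_complE _ ALA A_pos).1 ncA.
rewrite anchor_extra_parts add0n => dA_eq.
have ncB L : in_cell (cut_cell B) L -> ncomp_compl src tgt M L k.+1 <-> k = (#|B| + dA)%N.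
  move=> BL; rewrite (ncomp_complE _ BL (cut_cell_pos B)) cut_cell_extra_parts.
  by rewrite uncut_components_cut_cell -dA_eq addnS; split => [[]|->].
split => [[L BL /(ncB L BL)] //|k_eq].
by have [_ [L BL]] := cut_cell_is_cell B; exists L => //; apply/(ncB L BL).
Qed.

Lemma anchor_fiber_card : exists s : seq (cdata V E),
  [/\ uniq s, size s = (2 ^ s_anchor A)%N &
      forall C, C \in s <-> (is_cell C /\ anchor_of C = A)].
Proof.
exists [seq cut_cell B | B <- enum (powerset [set: gap A])]; split.
- by rewrite map_inj_uniq ?enum_uniq //; apply: cut_cell_inj.
- by rewrite size_map -cardE card_powerset cardsT card_gap.
move=> C; split => [/mapP[B _ ->]|[C_cell CA]].
  by split; [apply: cut_cell_is_cell | apply: anchor_of_cut_cell].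
by have [B ->] := cut_cell_onto C_cell CA; apply: map_f; rewrite mem_enum powersetE subsetT.
Qed.

Lemma anchor_fiber_dim_card dA j : cell_dim src tgt M D A dA -> exists s : seq (cdata V E),
  [/\ uniq s, size s = 'C(s_anchor A, j) &
      forall C, C \in s <->
        [/\ is_cell C, anchor_of C = A & cell_dim src tgt M D C (dA + j)]].
Proof.
move=> A_dim; exists [seq cut_cell B | B <- enum [set B : {set gap A} | #|B| == j]]; split.
- by rewrite map_inj_uniq ?enum_uniq //; apply: cut_cell_inj.
- by rewrite size_map -cardE card_draws card_gap.
move=> C; split => [/mapP[B]|[C_cell CA C_dim]].
  rewrite mem_enum inE => /eqP B_card ->; split.
  - exact: cut_cell_is_cell.
  - exact: anchor_of_cut_cell.
  - by apply/(cut_cell_dim _ _ A_dim); rewrite addnC B_card.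
have [B CB] := cut_cell_onto C_cell CA; rewrite CB in C_dim *.
by apply: map_f; rewrite mem_enum inE; move/(cut_cell_dim _ _ A_dim): C_dim; lia.
Qed.

End AnchorFiber.
End MetricGraphCells.

Theorem theorem2p12 (R : realType) (V E : finType) (src tgt : E -> V) (M : E -> R)
  (hM : forall e, 0 < M e) (hconn : connected_graph src tgt)
  (D : point R V E -> int) (hD : is_divisor M D) (heff : effective D)
  (hvs : vertex_supported D) :
  exists a : cdata V E -> cdata V E,
    (forall C, is_cell src tgt M D C ->
       is_anchor_cell src tgt M D (a C) /\
       forall L, in_cell src tgt M D C L ->
         exists N, [/\ in_cell src tgt M D (a C) N,
                       forall v, N (PV R E v) = L (PV R E v) &
                       forall f g, RD src tgt M D f -> RD src tgt M D g ->
                         L = addpdiv src tgt M D f -> N = addpdiv src tgt M D g ->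
                         forall e, out0 src tgt M f e = out0 src tgt M g e /\
                                   out1 src tgt M f e = out1 src tgt M g e])
    /\
    (forall A, is_anchor_cell src tgt M D A ->
       (exists s : seq (cdata V E),
          [/\ uniq s, size s = (2 ^ s_anchor A)%N &
              forall C, C \in s <-> (is_cell src tgt M D C /\ a C = A)])
       /\
       forall dA j, cell_dim src tgt M D A dA -> (j <= s_anchor A)%N ->
         exists s : seq (cdata V E),
           [/\ uniq s, size s = 'C(s_anchor A, j) &
               forall C, C \in s <->
                 [/\ is_cell src tgt M D C, a C = A & cell_dim src tgt M D C (dA + j)]]).
Proof.
exists (@anchor_of V E); split => [C C_cell|A A_anchor].
  by have := anchor_of_spec hM hvs C_cell.
split; first by have := anchor_fiber_card hM hvs A_anchor.
by move=> dA j A_dim _; have := anchor_fiber_dim_card hM hvs A_anchor j A_dim.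
Qed.
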